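(* Let $(\Gamma,\Lambda)$ be a Hecke pair with $\Lambda$ finitely generated. Suppose there is a locally compact group $E$ and a homomorphism $\phi:\Gamma\to E$ such that $\phi|_\Lambda$ is a virtual uniform lattice embedding. Then $E$ is an engulfing group of $(\Gamma,\Lambda)$ and $\Lambda$ is uniformly commensurated in $\Gamma$.
   Context: A Hecke pair $(\Gamma,\Lambda)$ is a group with a commensurated subgroup. Virtual uniform lattice embedding: finite kernel, discrete cocompact image. $E$ is an engulfing group of $(\Gamma,\Lambda)$ if there are a virtual uniform lattice embedding $\rho:\Lambda\to E$ and a homomorphism $\Delta:\Gamma\to\mathrm{Aut}(E)$ extending $h\mapsto$ conjugation by $\rho(h)$ on $\Lambda$, such that for every $g\in\Gamma$, $\Delta(g)(\rho(h))=\rho(ghg^{-1})$ for all $h$ in some finite index subgroup of $\Lambda$. Uniformly commensurated: there are $K,A$ such that each element of the image of the conjugation map $\Gamma\to\mathrm{Comm}(\Lambda)\to\mathrm{QI}(\Lambda)$ is represented by a $(K,A)$-quasi-isometry of $\Lambda$ (word metric). *)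

From HB Require Import structures.
From mathcomp Require Import all_boot all_algebra.
From mathcomp Require Import all_classical all_reals all_analysis.
From Stdlib Require Import Rdefinitions Raxioms RIneq List.


Local Open Scope classical_set_scope.

Record AbsGroup := {
  gcar :> Type;
  gmul : gcar -> gcar -> gcar;
  ginv : gcar -> gcar;
  gone : gcar;
  gmulA : forall x y z, gmul x (gmul y z) = gmul (gmul x y) z;
  gmul1 : forall x, gmul gone x = x;
  gmulV : forall x, gmul (ginv x) x = gone
}.

Record TopGroup := {
  tgsp : topologicalType;
  tmul : tgsp -> tgsp -> tgsp;
  tinv : tgsp -> tgsp;
  tone : tgsp;
  tmulA : forall x y z, tmul x (tmul y z) = tmul (tmul x y) z;
  tmul1 : forall x, tmul tone x = x;
  tmulV : forall x, tmul (tinv x) x = tone;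
  tmul_cont : continuous (fun p : tgsp * tgsp => tmul p.1 p.2);
  tinv_cont : continuous tinv
}.

Set Implicit Arguments.
Unset Strict Implicit.
Unset Printing Implicit Defensive.

Arguments gmul {a}. Arguments ginv {a}. Arguments tmul {t}. Arguments tinv {t}.

(* Locally compact group (Hausdorff, as is the standard convention). *)
Definition locally_compact_group (E : TopGroup) : Prop :=
  hausdorff_space (tgsp E) /\ locally_compact [set: tgsp E].

Definition subgroup (G : AbsGroup) (H : G -> Prop) : Prop :=
  H (gone G) /\
  (forall x y, H x -> H y -> H (gmul x y)) /\
  (forall x, H x -> H (ginv x)).

Definition finite_index (G : AbsGroup) (H K : G -> Prop) : Prop :=
  subgroup H /\ (forall x, H x -> K x) /\
  exists s : list G, forall k, K k ->
    exists x, In x s /\ K x /\ H (gmul (ginv x) k).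

(* conjugate g L g^{-1} *)
Definition conj_set (G : AbsGroup) (g : G) (L : G -> Prop) : G -> Prop :=
  fun y => L (gmul (ginv g) (gmul y g)).

Definition conjg (G : AbsGroup) (g h : G) : G := gmul g (gmul h (ginv g)).

Definition hecke_pair (G : AbsGroup) (L : G -> Prop) : Prop :=
  subgroup L /\
  forall g : G,
    finite_index (fun y => L y /\ conj_set g L y) L /\
    finite_index (fun y => L y /\ conj_set g L y) (conj_set g L).

Fixpoint eval_word (G : AbsGroup) (w : list (bool * G)) : G :=
  match w with
  | nil => gone G
  | (b, s) :: w' => gmul (if b then ginv s else s) (eval_word w')
  end.

Definition word_over (G : AbsGroup) (S : list G) (w : list (bool * G)) : Prop :=
  forall p, In p w -> In (snd p) S.

Definition finite_generating_set (G : AbsGroup) (L : G -> Prop) (S : list G) : Prop :=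
  (forall s, In s S -> L s) /\
  forall x, L x <-> exists w, word_over S w /\ eval_word w = x.

Definition finitely_generated (G : AbsGroup) (L : G -> Prop) : Prop :=
  exists S, finite_generating_set L S.

Definition word_dist (G : AbsGroup) (S : list G) (x y : G) (n : nat) : Prop :=
  (exists w, word_over S w /\ length w = n /\ eval_word w = gmul (ginv x) y) /\
  (forall w, word_over S w -> eval_word w = gmul (ginv x) y -> (n <= length w)%coq_nat).

(* f : L -> L (given as a map on G preserving L) is a (K,A)-quasi-isometry
   of L with the word metric d_S. *)
Definition quasi_isometry (G : AbsGroup) (L : G -> Prop) (S : list G)
    (K A : R) (f : G -> G) : Prop :=
  Rle 1 K /\ (forall x, L x -> L (f x)) /\
  (forall x y n m, L x -> L y -> word_dist S x y n -> word_dist S (f x) (f y) m ->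
     Rle (Rminus (Rdiv (INR n) K) A) (INR m) /\
     Rle (INR m) (Rplus (Rmult K (INR n)) A)) /\
  (forall y, L y -> exists x n, L x /\ word_dist S (f x) y n /\ Rle (INR n) A).

(* Uniformly commensurated: for a word metric d_S on L there are K, A such that
   the image of each g in QI(L) (the class of the partial isomorphism
   h |-> g h g^{-1} defined on the finite-index subgroup L /\ g^{-1} L g)
   is represented by a (K,A)-quasi-isometry, i.e. a (K,A)-QI at bounded
   distance from h |-> g h g^{-1} on its domain. *)
Definition uniformly_commensurated (G : AbsGroup) (L : G -> Prop) : Prop :=
  forall S, finite_generating_set L S ->
  exists K A : R, forall g : G,
    exists f : G -> G, quasi_isometry L S K A f /\
      exists D : nat, forall h, L h -> conj_set (ginv g) L h ->
        exists n, word_dist S (f h) (conjg g h) n /\ (n <= D)%coq_nat.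

Definition hom_on (G : AbsGroup) (E : TopGroup) (L : G -> Prop) (rho : G -> tgsp E) : Prop :=
  forall x y, L x -> L y -> rho (gmul x y) = tmul (rho x) (rho y).

Definition virtual_uniform_lattice_embedding (G : AbsGroup) (L : G -> Prop)
    (E : TopGroup) (rho : G -> tgsp E) : Prop :=
  hom_on L rho /\
  (exists s : list G, forall h, L h -> rho h = tone E -> In h s) /\
  (forall h, L h -> exists U : set (tgsp E), open U /\ U (rho h) /\
     forall h', L h' -> U (rho h') -> rho h' = rho h) /\
  (exists C : set (tgsp E), compact C /\
     forall e : tgsp E, exists c h, C c /\ L h /\ e = tmul c (rho h)).

Definition top_group_aut (E : TopGroup) (a : tgsp E -> tgsp E) : Prop :=
  (forall x y, a (tmul x y) = tmul (a x) (a y)) /\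
  continuous a /\
  exists b : tgsp E -> tgsp E, continuous b /\ cancel a b /\ cancel b a.

Definition conj_E (E : TopGroup) (e x : tgsp E) : tgsp E := tmul e (tmul x (tinv e)).

Definition engulfing_group (G : AbsGroup) (L : G -> Prop) (E : TopGroup) : Prop :=
  exists (rho : G -> tgsp E) (Delta : G -> tgsp E -> tgsp E),
    virtual_uniform_lattice_embedding L rho /\
    (forall g, top_group_aut (Delta g)) /\
    (forall g1 g2 x, Delta (gmul g1 g2) x = Delta g1 (Delta g2 x)) /\
    (forall h, L h -> forall x, Delta h x = conj_E (rho h) x) /\
    (forall g : G, exists L' : G -> Prop, finite_index L' L /\
       forall h, L' h -> Delta g (rho h) = rho (conjg g h)).

From Pilot Require Import Defs.
From mathcomp Require Import all_boot all_classical all_reals all_analysis.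
From mathcomp Require Import zify.
From Stdlib Require Import Rdefinitions RIneq List Lia Lra.

(* Since phi is defined on all of Gam, conjugation by phi g is an engulfing
   action. For uniform commensuration, cocompactness writes every e in E as
   phi(l) p with l in Lam and p in a fixed compact set P; let shift e h be the
   Lam-part of e phi(h). Two values of shift e on neighbours h, h s differ by a
   lattice element whose image lies in the compact set P phi(s) P^-1, and the
   lattice points with image in a compact set have bounded word length (finite
   kernel, discrete image). So every shift e is coarse Lipschitz, with a
   constant independent of e, and shift e^-1 is a coarse inverse of shift e:
   these are (K,A)-quasi-isometries with uniform K, A, and shift (phi g) is at
   bounded distance from conjugation by g. *)

Local Open Scope classical_set_scope.

Section GroupTheory.
Context {G : AbsGroup}.
Implicit Types x y : G.

Lemma gmulVr x : gmul x (ginv x) = gone G.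
Proof.
rewrite -[gmul x (ginv x)](gmul1 G) -(gmulV G (ginv x)).
by rewrite -gmulA (gmulA G (ginv x)) gmulV gmul1 gmulV.
Qed.

Lemma gmul1r x : gmul x (gone G) = x.
Proof. by rewrite -(gmulV G x) gmulA gmulVr gmul1. Qed.

Lemma ginvK x : ginv (ginv x) = x.
Proof. by rewrite -[ginv (ginv x)]gmul1r -(gmulV G x) gmulA gmulV gmul1. Qed.

Lemma gmulKl x y : gmul (ginv x) (gmul x y) = y.
Proof. by rewrite gmulA gmulV gmul1. Qed.

Lemma gmulKr x y : gmul x (gmul (ginv x) y) = y.
Proof. by rewrite gmulA gmulVr gmul1. Qed.

Lemma ginv_uniq x y : gmul x y = gone G -> ginv x = y.
Proof. by move=> xy1; rewrite -[y](gmulKl x) xy1 gmul1r. Qed.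

Lemma ginvM x y : ginv (gmul x y) = gmul (ginv y) (ginv x).
Proof. by apply: ginv_uniq; rewrite -gmulA gmulKr gmulVr. Qed.

Lemma ginv1 : ginv (gone G) = gone G.
Proof. by apply: ginv_uniq; rewrite gmul1. Qed.

End GroupTheory.

Definition abs_group_of (E : TopGroup) : AbsGroup :=
  @Build_AbsGroup (tgsp E) tmul tinv (tone E) (tmulA E) (tmul1 E) (tmulV E).

Section TopGroupTheory.
Context {E : TopGroup}.
Implicit Types x y : tgsp E.

Lemma tmulVr x : tmul x (tinv x) = tone E.
Proof. exact: (@gmulVr (abs_group_of E)). Qed.

Lemma tmul1r x : tmul x (tone E) = x.
Proof. exact: (@gmul1r (abs_group_of E)). Qed.

Lemma tinvK x : tinv (tinv x) = x.
Proof. exact: (@ginvK (abs_group_of E)). Qed.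

Lemma tmulKl x y : tmul (tinv x) (tmul x y) = y.
Proof. exact: (@gmulKl (abs_group_of E)). Qed.

Lemma tmulKr x y : tmul x (tmul (tinv x) y) = y.
Proof. exact: (@gmulKr (abs_group_of E)). Qed.

Lemma tinv_uniq x y : tmul x y = tone E -> tinv x = y.
Proof. exact: (@ginv_uniq (abs_group_of E)). Qed.

Lemma tinvM x y : tinv (tmul x y) = tmul (tinv y) (tinv x).
Proof. exact: (@ginvM (abs_group_of E)). Qed.

Lemma tinv1 : tinv (tone E) = tone E.
Proof. exact: (@ginv1 (abs_group_of E)). Qed.

End TopGroupTheory.

Ltac tsimpl := repeat progress rewrite ?tinvM ?tinvK ?tinv1 ?tmulKl ?tmulKr
  ?tmulVr ?tmulV ?tmul1 ?tmul1r -?tmulA.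

Section TopologicalGroups.
Context {E : TopGroup}.
Implicit Types x y : tgsp E.

Lemma tmul_continuousl (a : tgsp E) : continuous (tmul a).
Proof.
move=> x.
have pair_cvg : (fun y => (a, y)) @ x --> (a, x) by exact: (cvg_pair (cvg_cst a) cvg_id).
exact: (continuous_comp pair_cvg (tmul_cont E (a, x))).
Qed.

Lemma tmul_continuousr (a : tgsp E) : continuous (tmul^~ a).
Proof.
move=> x.
have pair_cvg : (fun y => (y, a)) @ x --> (x, a) by exact: (cvg_pair cvg_id (cvg_cst a)).
exact: (continuous_comp pair_cvg (tmul_cont E (x, a))).
Qed.

Lemma tdivl_continuous : continuous (fun p : tgsp E * tgsp E => tmul (tinv p.1) p.2).
Proof.
move=> [x y].
have pair_cvg : (fun p : tgsp E * tgsp E => (tinv p.1, p.2)) @ (x, y) --> (tinv x, y).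
  apply: cvg_pair; last exact: cvg_snd.
  have fst_cvg : (fun p : tgsp E * tgsp E => p.1) @ (x, y) --> x by exact: cvg_fst.
  exact: (continuous_comp fst_cvg (tinv_cont E x)).
exact: (continuous_comp pair_cvg (tmul_cont E (tinv x, y))).
Qed.

Definition setmul (A B : set (tgsp E)) : set (tgsp E) :=
  (fun p => tmul p.1 p.2) @` (A `*` B).

Definition setinv (A : set (tgsp E)) : set (tgsp E) := tinv @` A.

Lemma compact_setmul {A B : set (tgsp E)} : compact A -> compact B -> compact (setmul A B).
Proof.
move=> cA cB; apply: continuous_compact; last exact: compact_setX.
exact/continuous_subspaceT/tmul_cont.
Qed.

Lemma compact_setinv {A : set (tgsp E)} : compact A -> compact (setinv A).
Proof. by move=> cA; apply: continuous_compact cA; exact/continuous_subspaceT/tinv_cont. Qed.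

Lemma mem_setmul {A B : set (tgsp E)} {a b} : A a -> B b -> setmul A B (tmul a b).
Proof. by move=> Aa Bb; exists (a, b). Qed.

Lemma mem_setinv {A : set (tgsp E)} {a} : A a -> setinv A (tinv a).
Proof. by move=> Aa; exists a. Qed.

Lemma conj_E_aut (e : tgsp E) : top_group_aut (conj_E e).
Proof.
have conj_continuous (a : tgsp E) : continuous (conj_E a).
  by move=> x; exact: (continuous_comp (tmul_continuousr (tinv a) x) (tmul_continuousl a _)).
have conj_EK (a : tgsp E) : cancel (conj_E a) (conj_E (tinv a)).
  by move=> x; rewrite /conj_E; tsimpl.
split; first by move=> x y; rewrite /conj_E; tsimpl.
split; first exact: conj_continuous.
exists (conj_E (tinv e)); split; first exact: conj_continuous.
by split; [exact: conj_EK|have := conj_EK (tinv e); rewrite tinvK].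
Qed.

Lemma conj_EM (a b x : tgsp E) : conj_E (tmul a b) x = conj_E a (conj_E b x).
Proof. by rewrite /conj_E tinvM -!tmulA. Qed.

End TopologicalGroups.

Section Homomorphism.
Context {G : AbsGroup} {E : TopGroup} {phi : G -> tgsp E}.
Hypothesis phiM : forall x y, phi (gmul x y) = tmul (phi x) (phi y).

Lemma hom1 : phi (gone G) = tone E.
Proof.
have := phiM (gone G) (gone G); rewrite gmul1 => h.
by rewrite -[LHS](tmulKl (phi (gone G))) -h tmulV.
Qed.

Lemma homV x : phi (ginv x) = tinv (phi x).
Proof. by symmetry; apply: tinv_uniq; rewrite -phiM gmulVr hom1. Qed.

Lemma finite_index_refl {L : G -> Prop} : subgroup L -> finite_index L L.
Proof.
move=> sL; split=> //; split=> //.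
exists (gone G :: nil) => k Lk; exists (gone G).
by split; [left|split; [exact: sL.1|rewrite ginv1 gmul1]].
Qed.

Lemma engulfing_group_of_hom {L : G -> Prop} :
  virtual_uniform_lattice_embedding L phi -> subgroup L -> engulfing_group L E.
Proof.
move=> vule sL; exists phi, (fun g => conj_E (phi g)).
split=> //; split; first exact: (fun g => conj_E_aut (phi g)).
split; first by move=> g1 g2 x; rewrite phiM conj_EM.
split=> // g; exists L; split; first exact: finite_index_refl.
by move=> h _; rewrite /Defs.conjg !phiM homV.
Qed.

End Homomorphism.

Lemma list_uniform_bound {T : Type} (Q : T -> nat -> Prop) (s : list T) :
  (forall x n m, n <= m -> Q x n -> Q x m) ->
  (forall x, In x s -> exists n, Q x n) -> exists N, forall x, In x s -> Q x N.
Proof.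
move=> Qmono; elim: s => [|a s IH] bounded; first by exists 0.
have [n Qa] := bounded a (or_introl erefl).
have [N QN] := IH (fun x xs => bounded x (or_intror xs)).
exists (n + N) => x [<-|xs]; first by apply: Qmono Qa; lia.
by apply: Qmono (QN x xs); lia.
Qed.

Definition len_le {G : AbsGroup} (S : list G) (x : G) (n : nat) : Prop :=
  exists w, word_over S w /\ length w <= n /\ eval_word w = x.

Section WordLength.
Context {G : AbsGroup} {S : list G}.

Lemma eval_word_cat (w1 w2 : list (bool * G)) :
  eval_word (w1 ++ w2) = gmul (eval_word w1) (eval_word w2).
Proof. by elim: w1 => [|[b s] w IH] /=; rewrite ?gmul1 ?IH ?gmulA. Qed.

Lemma len_le_mul {x y n m} : len_le S x n -> len_le S y m -> len_le S (gmul x y) (n + m).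
Proof.
move=> [w1 [Sw1 [w1n <-]]] [w2 [Sw2 [w2m <-]]]; exists (w1 ++ w2).
split; first by move=> p /(in_app_or w1 w2 p) [wp|wp]; [apply: Sw1|apply: Sw2].
by rewrite app_length eval_word_cat; split=> //; lia.
Qed.

Lemma len_le_mono {x n m} : n <= m -> len_le S x n -> len_le S x m.
Proof. by move=> nm [w [Sw [wn wx]]]; exists w; split=> //; split=> //; lia. Qed.

Context {L : G -> Prop}.
Hypotheses (sL : subgroup L) (gS : finite_generating_set L S).

Lemma len_le_exists {x} : L x -> exists n, len_le S x n.
Proof. by move=> /gS.2 [w [Sw wx]]; exists (length w), w. Qed.

Lemma word_dist_exists {x y} : L x -> L y -> exists n, word_dist S x y n.
Proof.
move=> Lx Ly; have [_ [Lmul Linv]] := sL.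
pose P n := exists w, word_over S w /\ length w = n /\ eval_word w = gmul (ginv x) y.
have [n [w [Sw [_ wxy]]]] := len_le_exists (Lmul _ _ (Linv _ Lx) Ly).
have exP : exists n, `[< P n >] by exists (length w); apply/asboolP; exists w.
case: (ex_minnP exP) => m /asboolP Pm minm; exists m; split=> // w' Sw' w'xy.
by apply/leP/minm/asboolP; exists w'.
Qed.

Lemma word_dist_le {x y n m} : word_dist S x y n -> len_le S (gmul (ginv x) y) m -> n <= m.
Proof. by move=> [_ minn] [w [Sw [wm wxy]]]; have := minn w Sw wxy; lia. Qed.

Lemma word_dist_len_le {x y n} : word_dist S x y n -> len_le S (gmul (ginv x) y) n.
Proof. by move=> [[w [Sw [wn wxy]]] _]; exists w; split=> //; split=> //; lia. Qed.

Lemma len_le_lipschitz {F : G -> G} {M : nat} :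
  (forall h s (b : bool), L h -> In s S ->
     len_le S (gmul (ginv (F h)) (F (gmul h (if b then ginv s else s)))) M) ->
  forall {h1 h2 n}, L h1 -> word_dist S h1 h2 n ->
    len_le S (gmul (ginv (F h1)) (F h2)) (M * n).
Proof.
move=> Fstep h1 h2 n Lh1 /word_dist_len_le [w [Sw [wn wh]]].
rewrite -(gmulKr h1 h2) -wh; apply: (len_le_mono (leq_mul (leqnn M) wn)).
have [_ [Lmul Linv]] := sL.
clear wn wh; elim: w Sw h1 Lh1 => [|[b s] w IH] Sw h Lh /=.
  by rewrite gmul1r gmulV muln0; exists nil.
have Ss : In s S by apply: (Sw (b, s)); left.
have Lt : L (if b then ginv s else s) by case: b {Sw}; [apply: Linv|]; exact: gS.1.
have := len_le_mul (Fstep h s b Lh Ss) (IH (fun p wp => Sw p (or_intror wp)) _ (Lmul _ _ Lh Lt)).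
by rewrite -gmulA gmulKr gmulA mulnS; apply: len_le_mono.
Qed.

Lemma len_le_list_bound (s : list G) : exists N, forall x, In x s -> L x -> len_le S x N.
Proof.
apply: list_uniform_bound => [x n m nm bound Lx|x _]; first exact: len_le_mono nm (bound Lx).
have [Lx|nLx] := pselect (L x); last by exists 0.
by have [n xn] := len_le_exists Lx; exists n.
Qed.

End WordLength.

Lemma qi_bounds_of_nat_bounds (M A n m : nat) : m <= M * n -> n <= A + M * m ->
  Rle (Rminus (Rdiv (INR n) (INR M.+1)) (INR A)) (INR m) /\
  Rle (INR m) (Rplus (Rmult (INR M.+1) (INR n)) (INR A)).
Proof.
move=> mMn nAMm; have M1_gt0 : Rlt 0 (INR M.+1) by apply: lt_0_INR; lia.
split.
- have : Rle (INR n) (Rmult (INR M.+1) (Rplus (INR m) (INR A))).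
    by rewrite -plus_INR -mult_INR; apply/le_INR/leP; nia.
  move=> nle; apply: (Rmult_le_reg_l (INR M.+1)) => //.
  rewrite Rmult_minus_distr_l /Rdiv -Rmult_assoc (Rmult_comm _ (INR n)) Rmult_assoc Rinv_r; lra.
- by rewrite -mult_INR -plus_INR; apply/le_INR/leP; nia.
Qed.

Section LatticeEmbedding.
Context {G : AbsGroup} {E : TopGroup}.
Context {L : G -> Prop} {phi : G -> tgsp E}.
Hypotheses (sL : subgroup L) (phiM : forall x y, phi (gmul x y) = tmul (phi x) (phi y))
  (vule : virtual_uniform_lattice_embedding L phi).

Lemma lattice_section : exists (P : set (tgsp E)) (lpart : tgsp E -> G)
    (ppart : tgsp E -> tgsp E), compact P /\ (forall e, L (lpart e)) /\
  (forall e, P (ppart e)) /\ (forall e, e = tmul (phi (lpart e)) (ppart e)).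
Proof.
have [_ [_ [_ [C [cC cover]]]]] := vule.
have decomp e : exists lp : G * tgsp E, L lp.1 /\ setinv C lp.2 /\ e = tmul (phi lp.1) lp.2.
  have [c [h [Cc [Lh ech]]]] := cover (tinv e).
  exists (ginv h, tinv c); split; first exact: sL.2.2.
  split; first exact: mem_setinv.
  by rewrite /= (homV phiM) -tinvM -ech tinvK.
have [sect sectP] := choice decomp.
exists (setinv C), (fun e => (sect e).1), (fun e => (sect e).2).
split; first exact: compact_setinv.
by split=> [e|]; [|split=> e]; have [? [? ?]] := sectP e.
Qed.

Lemma kernel_nbhs : exists W : set (tgsp E), open W /\ W (tone E) /\
  forall x l0 l, L l0 -> L l -> W (tmul (tinv x) (phi l0)) -> W (tmul (tinv x) (phi l)) ->
    phi (gmul (ginv l0) l) = tone E.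
Proof.
have [_ [_ [discrete _]]] := vule.
have [L1 [Lmul Linv]] := sL.
have [V [oV [V1 Vdisc]]] := discrete _ L1.
rewrite (hom1 phiM) in V1 Vdisc.
have : nbhs (tmul (tinv (tone E)) (tone E)) V by rewrite tinv1 tmul1; exact: open_nbhs_nbhs.
move=> /(tdivl_continuous (tone E, tone E)) [[A B] /= [nA nB] ABV].
have : nbhs (tone E) (A `&` B) by exact: filterI.
rewrite nbhsE => -[W [oW W1] WAB].
exists W; split=> //; split=> // x l0 l L0 Ll W0 Wl.
apply: Vdisc; first exact: Lmul (Linv _ L0) Ll.
have := ABV (tmul (tinv x) (phi l0), tmul (tinv x) (phi l)) (conj (WAB _ W0).1 (WAB _ Wl).2).
by rewrite /= phiM (homV phiM) tinvM tinvK -tmulA tmulKr.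
Qed.

Section WordMetric.
Context {S : list G}.
Hypothesis gS : finite_generating_set L S.

Lemma kernel_len_bounded : exists N, forall k, L k -> phi k = tone E -> len_le S k N.
Proof.
have [_ [[ker kerP] _]] := vule.
have [N kerN] := len_le_list_bound gS ker.
by exists N => k Lk k1; apply: kerN (kerP k Lk k1) Lk.
Qed.

Lemma compact_len_bounded {K} : compact K -> exists N, forall l, L l -> K (phi l) -> len_le S l N.
Proof.
move=> /compact_near_coveringP cK.
have [W [oW [W1 Wker]]] := kernel_nbhs.
have [Nk kerNk] := kernel_len_bounded.
have translate_bounded x : exists N, forall l, L l -> W (tmul (tinv x) (phi l)) -> len_le S l N.
  have [[l0 [L0 W0]]|none] := pselect (exists l0, L l0 /\ W (tmul (tinv x) (phi l0))).
    have [n0 l0n0] := len_le_exists gS L0.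
    exists (n0 + Nk) => l Ll Wl; rewrite -(gmulKr l0 l); apply: len_le_mul l0n0 _.
    by apply: kerNk; [exact: sL.2.1 _ _ (sL.2.2 _ L0) Ll|exact: Wker W0 Wl].
  by exists 0 => l Ll Wl; case: none; exists l.
have : \forall N \near \oo, K `<=` [set y | forall l, L l -> phi l = y -> len_le S l N].
  apply: cK => x Kx.
  have [N xN] := translate_bounded x.
  exists ([set y | W (tmul (tinv x) y)], [set n | N <= n]).
    split; last exact: nbhs_infty_ge.
    apply: (tmul_continuousl (tinv x) x); rewrite /= tmulV.
    exact: open_nbhs_nbhs.
  move=> [y n] /= [Wy Nn] l Ll ly.
  by apply: (len_le_mono Nn); apply: xN Ll _; rewrite ly.
by case=> N0 _ KN0; exists N0 => l Ll Kl; exact: (KN0 N0 (leqnn N0) _ Kl l Ll erefl).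
Qed.

Section Shift.
Context {P : set (tgsp E)} {lpart : tgsp E -> G} {ppart : tgsp E -> tgsp E}.
Hypotheses (cP : compact P) (lpartL : forall e, L (lpart e)) (ppartP : forall e, P (ppart e))
  (lpartE : forall e, e = tmul (phi (lpart e)) (ppart e)).

Definition shift (e : tgsp E) (h : G) : G := lpart (tmul e (phi h)).

Lemma phi_lpart e : phi (lpart e) = tmul e (tinv (ppart e)).
Proof. by rewrite {2}(lpartE e) -tmulA tmulVr tmul1r. Qed.

Lemma shift_lipschitz : exists M, forall e h s (b : bool), L h -> In s S ->
  len_le S (gmul (ginv (shift e h)) (shift e (gmul h (if b then ginv s else s)))) M.
Proof.
have [_ [Lmul Linv]] := sL.
have step_bounded t : exists N, forall e h, L h ->
    len_le S (gmul (ginv (shift e h)) (shift e (gmul h t))) N.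
  have cK := compact_setmul cP (compact_setmul (@compact_set1 _ (phi t)) (compact_setinv cP)).
  have [N KN] := compact_len_bounded cK.
  exists N => e h Lh; apply: KN; first exact: Lmul (Linv _ (lpartL _)) (lpartL _).
  rewrite phiM (homV phiM) !phi_lpart phiM; tsimpl.
  by apply: mem_setmul => //; apply: mem_setmul => //; exact: mem_setinv.
pose gen_step s N := forall e h (b : bool), L h ->
  len_le S (gmul (ginv (shift e h)) (shift e (gmul h (if b then ginv s else s)))) N.
have [M MS] : exists M, forall s, In s S -> gen_step s M.
  apply: list_uniform_bound.
  - by move=> s n m nm sn e h b Lh; exact: len_le_mono nm (sn e h b Lh).
  - move=> s _; have [N1 N1s] := step_bounded (ginv s); have [N2 N2s] := step_bounded s.
    exists (N1 + N2) => e h [] Lh.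
    + exact: len_le_mono (leq_addr N2 N1) (N1s e h Lh).
    + exact: len_le_mono (leq_addl N1 N2) (N2s e h Lh).
by exists M => e h s b Lh Ss; exact: MS.
Qed.

Lemma shiftVK_close : exists B, forall e h, L h ->
  len_le S (gmul (ginv h) (shift (tinv e) (shift e h))) B /\
  len_le S (gmul (ginv (shift (tinv e) (shift e h))) h) B.
Proof.
have [_ [Lmul Linv]] := sL.
have [B1 B1K] := compact_len_bounded (compact_setmul (compact_setinv cP) (compact_setinv cP)).
have [B2 B2K] := compact_len_bounded (compact_setmul cP cP).
exists (B1 + B2) => e h Lh; split.
- apply: (len_le_mono (leq_addr B2 B1)); apply: B1K; first exact: Lmul (Linv _ Lh) (lpartL _).
  rewrite phiM (homV phiM) !phi_lpart; tsimpl.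
  by apply: mem_setmul; apply: mem_setinv.
- apply: (len_le_mono (leq_addl B1 B2)); apply: B2K; first exact: Lmul (Linv _ (lpartL _)) Lh.
  rewrite phiM (homV phiM) !phi_lpart; tsimpl.
  exact: mem_setmul.
Qed.

Lemma shift_quasi_isometry : exists K A, forall e, quasi_isometry L S K A (shift e).
Proof.
have [M lipM] := shift_lipschitz.
have [B closeB] := shiftVK_close.
exists (INR M.+1), (INR (B + B)) => e; split; first by rewrite S_INR; have := pos_INR M; lra.
split; first by move=> x _; exact: lpartL.
split=> [x y n m Lx Ly dxy dfxy|y Ly].
  apply: qi_bounds_of_nat_bounds.
    exact: word_dist_le dfxy (len_le_lipschitz sL gS (lipM e) Lx dxy).
  have [xB _] := closeB e x Lx; have [_ yB] := closeB e y Ly.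
  have fxy := len_le_lipschitz sL gS (lipM (tinv e)) (lpartL _) dfxy.
  have := len_le_mul (len_le_mul xB fxy) yB.
  by rewrite -!gmulA !gmulKr => /(word_dist_le dxy); lia.
have [n dn] := word_dist_exists sL gS (lpartL (tmul e (phi (shift (tinv e) y)))) Ly.
exists (shift (tinv e) y), n; split; first exact: lpartL.
split=> //; apply/le_INR/leP.
have [_ yB] := closeB (tinv e) y Ly; rewrite tinvK in yB.
by have := word_dist_le dn yB; lia.
Qed.

Lemma shift_close_conjg g : exists D, forall h, L h -> conj_set (ginv g) L h ->
  exists n, word_dist S (shift (phi g) h) (Defs.conjg g h) n /\ (n <= D)%coq_nat.
Proof.
have [_ [Lmul Linv]] := sL.
have [D DK] := compact_len_bounded (compact_setmul cP (@compact_set1 _ (tinv (phi g)))).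
exists D => h Lh Lgh.
have {Lgh} Lgh : L (Defs.conjg g h) by move: Lgh; rewrite /conj_set ginvK.
have [n dn] := word_dist_exists sL gS (lpartL (tmul (phi g) (phi h))) Lgh.
exists n; split=> //; apply/leP; apply: (word_dist_le dn); apply: DK.
  exact: Lmul (Linv _ (lpartL _)) Lgh.
rewrite /Defs.conjg !phiM !(homV phiM) !phi_lpart; tsimpl.
exact: mem_setmul.
Qed.

End Shift.
End WordMetric.

Lemma lattice_uniformly_commensurated : uniformly_commensurated L.
Proof.
move=> S gS.
have [P [lpart [ppart [cP [lpartL [ppartP lpartE]]]]]] := lattice_section.
have [K [A qi]] := shift_quasi_isometry gS cP lpartL ppartP lpartE.
exists K, A => g; exists (shift (lpart:=lpart) (phi g)); split; first exact: qi.
exact: (shift_close_conjg gS cP lpartL ppartP lpartE g).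
Qed.

End LatticeEmbedding.

Theorem lemma3p8 (Gam : AbsGroup) (Lam : Gam -> Prop) (Eg : TopGroup)
  (phi : Gam -> tgsp Eg) :
  hecke_pair Lam -> finitely_generated Lam ->
  locally_compact_group Eg ->
  (forall x y : Gam, phi (gmul x y) = tmul (phi x) (phi y)) ->
  virtual_uniform_lattice_embedding Lam phi ->
  engulfing_group Lam Eg /\ uniformly_commensurated Lam.
Proof.
move=> [sL _] _ _ phiM vule.
split; first exact: (engulfing_group_of_hom phiM vule sL).
exact: (lattice_uniformly_commensurated sL phiM vule).
Qed.
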